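(* For each of the following pairs $(X,i)$ there is no infinite binary word $\mathbf{x}$ with $p_i\,\mu(\mathbf{x})\in X$: $(B,2)$, $(B,4)$, $(D,2)$, $(D,4)$, $(C,1)$, $(C,2)$, $(C,4)$, $(E,2)$, $(E,3)$, $(E,4)$, $(F,0)$, $(F,1)$, $(F,2)$, $(F,4)$, $(J,2)$, $(J,3)$, $(J,4)$, $(K,2)$, $(K,3)$, $(K,4)$, $(I,0)$, $(I,2)$, $(I,3)$, $(I,4)$, $(G,1)$, $(G,2)$, $(G,4)$, $(H,1)$, $(H,2)$, $(H,4)$.
   Context: $\Sigma=\{0,1\}$. An overlap is a word $axaxa$ with $a\in\Sigma$, $x\in\Sigma^*$; a word is overlap-free if it has no overlap as a factor. $\mathcal{O}$ is the set of right-infinite binary overlap-free words, and $\mu$ is the morphism $0\mapsto01$, $1\mapsto10$. $p_0=\epsilon$, $p_1=0$, $p_2=00$, $p_3=1$, $p_4=11$. Subsets of $\Sigma^\omega$: $A=\mathcal{O}$; $B=\{\mathbf{x}: 1\mathbf{x}\in\mathcal{O}\}$; $C=\{\mathbf{x}: 1\mathbf{x}\in\mathcal{O}$ and $\mathbf{x}$ begins with $101\}$; $D=\{\mathbf{x}: 0\mathbf{x}\in\mathcal{O}\}$; $E=\{\mathbf{x}: 0\mathbf{x}\in\mathcal{O}$ and $\mathbf{x}$ begins with $010\}$; $F=\{\mathbf{x}: 0\mathbf{x}\in\mathcal{O}$ and $\mathbf{x}$ begins with $11\}$; $G=\{\mathbf{x}: 0\mathbf{x}\in\mathcal{O}$ and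 $\mathbf{x}$ begins with $1\}$; $H=\{\mathbf{x}: 1\mathbf{x}\in\mathcal{O}$ and $\mathbf{x}$ begins with $1\}$; $I=\{\mathbf{x}: 1\mathbf{x}\in\mathcal{O}$ and $\mathbf{x}$ begins with $00\}$; $J=\{\mathbf{x}: 1\mathbf{x}\in\mathcal{O}$ and $\mathbf{x}$ begins with $0\}$; $K=\{\mathbf{x}: 0\mathbf{x}\in\mathcal{O}$ and $\mathbf{x}$ begins with $0\}$. *)

From mathcomp Require Import all_boot.
Set Implicit Arguments. Unset Strict Implicit. Unset Printing Implicit Defensive.

(* Alphabet Sigma = {0,1} encoded as bool: 0 = false, 1 = true. *)
Definition iword := nat -> bool.

Definition segment (w : iword) (i n : nat) : seq bool := mkseq (fun k => w (i + k)) n.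

Definition ifactor (u : seq bool) (w : iword) : Prop := exists i, segment w i (size u) = u.

Definition overlap (a : bool) (x : seq bool) : seq bool := [:: a] ++ x ++ [:: a] ++ x ++ [:: a].

Definition overlap_free (w : iword) : Prop :=
  forall (a : bool) (x : seq bool), ~ ifactor (overlap a x) w.

Definition pcat (p : seq bool) (w : iword) : iword :=
  fun n => if n < size p then nth false p n else w (n - size p).

(* Thue-Morse morphism mu : 0 -> 01, 1 -> 10, extended to infinite words *)
Definition mu_letter (b : bool) : seq bool := [:: b; ~~ b].
Definition mu (w : iword) : iword := fun n => nth false (mu_letter (w n./2)) (odd n).

Definition begins_with (w : iword) (u : seq bool) : Prop := segment w 0 (size u) = u.

Definition p0 : seq bool := [::].
Definition p1 : seq bool := [:: false].
Definition p2 : seq bool := [:: false; false].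
Definition p3 : seq bool := [:: true].
Definition p4 : seq bool := [:: true; true].

Definition XA (w : iword) : Prop := overlap_free w.
Definition XB (w : iword) : Prop := overlap_free (pcat [:: true] w).
Definition XC (w : iword) : Prop := overlap_free (pcat [:: true] w) /\ begins_with w [:: true; false; true].
Definition XD (w : iword) : Prop := overlap_free (pcat [:: false] w).
Definition XE (w : iword) : Prop := overlap_free (pcat [:: false] w) /\ begins_with w [:: false; true; false].
Definition XF (w : iword) : Prop := overlap_free (pcat [:: false] w) /\ begins_with w [:: true; true].
Definition XG (w : iword) : Prop := overlap_free (pcat [:: false] w) /\ begins_with w [:: true].
Definition XH (w : iword) : Prop := overlap_free (pcat [:: true] w) /\ begins_with w [:: true].
Definition XI (w : iword) : Prop := overlap_free (pcat [:: true] w) /\ begins_with w [:: false; false].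
Definition XJ (w : iword) : Prop := overlap_free (pcat [:: true] w) /\ begins_with w [:: false].
Definition XK (w : iword) : Prop := overlap_free (pcat [:: false] w) /\ begins_with w [:: false].

Definition no_word (X : iword -> Prop) (p : seq bool) : Prop :=
  ~ exists x : iword, X (pcat p (mu x)).

From mathcomp Require Import all_boot.
Set Implicit Arguments. Unset Strict Implicit. Unset Printing Implicit Defensive.

(* Everything is decided by the first two letters of x: p mu(x) begins with
   p mu(x0 x1), and for each of the four choices of x0 x1 either this word does
   not begin as the set prescribes, or, preceded by the letter the set
   prepends, it already contains an overlap.  The four-way case split is
   checked by computation with a sound boolean overlap test. *)

Lemma take_segment w m n : m <= n -> take m (segment w 0 n) = segment w 0 m.
Proof. by move=> le_mn; rewrite /segment /mkseq -map_take take_iota (minn_idPl le_mn). Qed.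

Lemma segment_pcat q w n : segment (pcat q w) 0 (size q + n) = q ++ segment w 0 n.
Proof.
rewrite /segment /mkseq iotaD map_cat; congr (_ ++ _).
  rewrite -[RHS](mkseq_nth false); apply/eq_in_map => k; rewrite mem_iota /pcat /=.
  by move=> ->.
rewrite -[0 + size q]addn0 iotaDl -map_comp.
by apply/eq_map => k; rewrite /pcat /= !add0n ltnNge leq_addr addKn.
Qed.

Definition mu_word (l : seq bool) : seq bool := flatten (map mu_letter l).

Lemma segment_mu x k : segment (mu x) 0 k.*2 = mu_word (mkseq x k).
Proof.
elim: k => [|k IHk] //.
rewrite doubleS /segment !mkseqS -/(segment _ 0 _).
rewrite -cats1 -(cats1 (mkseq _ _)) -(cats1 _ (mu x _)) -catA /mu_word map_cat flatten_cat.
rewrite -/(segment _ 0 _) -/(mu_word _) IHk /= /mu /mu_letter /=.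
by rewrite odd_double doubleK uphalf_double.
Qed.

Lemma infix_segment_ifactor u w n : infix u (segment w 0 n) -> ifactor u w.
Proof.
move=> /infixP [s [s' seg_w]]; exists (size s).
have size_seg : size s + size u <= n.
  rewrite -(size_mkseq (fun k => w (0 + k)) n) -/(segment w 0 n) seg_w.
  by rewrite !size_cat addnA leq_addr.
apply: (@eq_from_nth _ false); rewrite /segment size_mkseq // => j lt_j.
have lt_n : size s + j < n by apply: leq_trans size_seg; rewrite ltn_add2l.
rewrite nth_mkseq // -[w _](nth_mkseq false _ lt_n) -/(segment w 0 n) seg_w.
by rewrite nth_cat ltnNge leq_addr addKn nth_cat lt_j.
Qed.

Definition has_overlap (s : seq bool) : bool :=
  has (fun i => has (fun n => infix (overlap (nth false s i) (take n (drop i.+1 s))) s)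
    (iota 0 (size s))) (iota 0 (size s)).

Lemma has_overlap_segment w n : has_overlap (segment w 0 n) -> ~ overlap_free w.
Proof.
by move=> /hasP [i _ /hasP [m _ /infix_segment_ifactor ov]] /(_ _ _ ov).
Qed.

Fixpoint words (k : nat) : seq (seq bool) :=
  if k is k'.+1 then [seq b :: l | b <- [:: false; true], l <- words k'] else [:: [::]].

Lemma mem_words k l : (l \in words k) = (size l == k).
Proof.
have mem_map_cons b b' l' (s : seq (seq bool)) :
    (b :: l' \in map (cons b') s) = (b == b') && (l' \in s).
  by apply/mapP/andP => [[l'' ? [-> ->]] | [/eqP -> ?]]; [split | exists l'].
elim: k l => [|k IHk] [|b l] //=; rewrite mem_cat cats0.
  by apply/negP => /orP [] /mapP [].
by rewrite !mem_map_cons IHk; case: b; rewrite /= ?orbF.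
Qed.

Definition refutes (q p u : seq bool) (k : nat) : bool :=
  all (fun l => ~~ prefix u (p ++ mu_word l) || has_overlap (q ++ p ++ mu_word l)) (words k).

Lemma refutesP q p u k : size u <= size p + k.*2 -> refutes q p u k ->
  ~ exists x, overlap_free (pcat q (pcat p (mu x))) /\ begins_with (pcat p (mu x)) u.
Proof.
move=> size_u /allP refute [x [ovf_x begins_x]].
have seg_p : segment (pcat p (mu x)) 0 (size p + k.*2) = p ++ mu_word (mkseq x k).
  by rewrite segment_pcat segment_mu.
have /refute/orP [] : mkseq x k \in words k by rewrite mem_words size_mkseq.
  by rewrite prefixE -seg_p take_segment // begins_x eqxx.
rewrite -seg_p -segment_pcat addnA => /has_overlap_segment; exact.
Qed.

Lemma refutes_overlap_free q p k : refutes q p [::] k ->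
  ~ exists x, overlap_free (pcat q (pcat p (mu x))).
Proof. by move=> /(@refutesP q p [::] k (leq0n _)) no_x [x ovf_x]; apply: no_x; exists x. Qed.

Theorem mainTheorem3 :
  no_word XB p2 /\ no_word XB p4 /\ no_word XD p2 /\ no_word XD p4 /\ no_word XC p1 /\ no_word XC p2 /\ no_word XC p4 /\ no_word XE p2 /\ no_word XE p3 /\ no_word XE p4 /\ no_word XF p0 /\ no_word XF p1 /\ no_word XF p2 /\ no_word XF p4 /\ no_word XJ p2 /\ no_word XJ p3 /\ no_word XJ p4 /\ no_word XK p2 /\ no_word XK p3 /\ no_word XK p4 /\ no_word XI p0 /\ no_word XI p2 /\ no_word XI p3 /\ no_word XI p4 /\ no_word XG p1 /\ no_word XG p2 /\ no_word XG p4 /\ no_word XH p1 /\ no_word XH p2 /\ no_word XH p4.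
Proof.
rewrite /no_word /XB /XC /XD /XE /XF /XG /XH /XI /XJ /XK.
by repeat split; first [apply: (@refutes_overlap_free _ _ 2) | apply: (@refutesP _ _ _ 2)]; vm_compute.
Qed.
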